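(* Let $(R,\mathcal B)$ be a bornological $V$-algebra. The following are equivalent: (1) $\varrho(M)\le1$ for all $M\in\mathcal B$ that are $V$-submodules; (2) $\sum_{j\ge0}\pi^jM^{cj+d}$ is bounded for all bounded $M$ and all $c,d\in\mathbb N$; (3) $\sum_{j\ge0}\pi^jM^{j+1}$ is bounded for all bounded $M$; (4) every bounded subset of $R$ is contained in a bounded $V$-submodule $M$ with $\pi M^2\subseteq M$.
   Context: $V$ complete DVR with uniformizer $\pi$, $|\pi|=\epsilon\in(0,1)$. A (convex) bornology: bounded sets contain finite sets, closed under subsets, finite unions and generated $V$-submodules; a bornological algebra has bounded multiplication. Sums $\sum_j X_j$ denote the set of finite sums of elements of $\bigcup_jX_j$. For $r\ge1$ and a $V$-submodule $M$, $r^{-n}\star M^n:=\pi^{\lceil\log_\epsilon(r^{-n})\rceil}M^n$, and ''$\varrho(M)\le1$'' means that $\sum_{n\ge0}r^{-n}\star M^n$ is bounded for every $r>1$. *)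

From Stdlib Require Import Reals ZArith.

(* ceiling of a real number: ceil x = 1 - up(-x), since up y is the unique
   integer with y < up y <= y + 1. *)
Definition Zceil (x : Rdefinitions.R) : Z := (1 - up (- x))%Z.

Definition log_base (eps y : Rdefinitions.R) : Rdefinitions.R := (ln y / ln eps)%R.

(* exponent k(eps,r,n) = ceil(log_eps(r^{-n})), so that
   r^{-n} ⋆ M^n = pi^{k} M^n.  For 0<eps<1 and r>=1 it is >= 0. *)
Definition star_exp (eps r : Rdefinitions.R) (n : nat) : nat :=
  Z.to_nat (Zceil (log_base eps (/ (r ^ n)))%R).

From HB Require Import structures.
From mathcomp Require Import all_boot all_order all_algebra.
Set Implicit Arguments. Unset Strict Implicit. Unset Printing Implicit Defensive.
Import Order.TTheory GRing.Theory Num.Theory.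
Local Open Scope ring_scope.

Definition complete_DVR_unif (V : idomainType) (pi : V) : Prop :=
  [/\ pi != 0, pi \notin GRing.unit,
      (forall x : V, x != 0 ->
         exists (n : nat) (u : V), u \is a GRing.unit /\ x = u * pi ^+ n),
      (forall x : V, (forall n : nat, exists y, x = pi ^+ n * y) -> x = 0)
    & (forall a : nat -> V, exists x : V, forall n : nat,
         exists y, x - \sum_(i < n) a i * pi ^+ i = pi ^+ n * y)].

Section Born.
Variables (V : idomainType) (A : algType V).

Definition incl_set (S T : A -> Prop) : Prop := forall x, S x -> T x.

Inductive finsums (U : A -> Prop) : A -> Prop :=
| finsums0 : finsums U 0
| finsumsS x s : U x -> finsums U s -> finsums U (x + s).

Definition span (S : A -> Prop) : A -> Prop :=
  finsums (fun z => exists (a : V) (x : A), S x /\ z = a *: x).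

Definition is_submod (M : A -> Prop) : Prop :=
  [/\ M 0, (forall x y, M x -> M y -> M (x + y))
    & (forall (a : V) x, M x -> M (a *: x))].

Fixpoint setpow (M : A -> Prop) (n : nat) : A -> Prop :=
  match n with
  | 0 => fun z => z = 1
  | n'.+1 => fun z => exists x y, setpow M n' x /\ M y /\ z = x * y
  end.

Definition sscale (a : V) (X : A -> Prop) : A -> Prop :=
  fun z => exists x, X x /\ z = a *: x.

Definition setmul (S T : A -> Prop) : A -> Prop :=
  fun z => exists x y, S x /\ T y /\ z = x * y.

Definition bornological_algebra (B : (A -> Prop) -> Prop) : Prop :=
  [/\ (forall s : seq A, B (fun x => x \in s)),
      (forall S T, B T -> incl_set S T -> B S),
      (forall S T, B S -> B T -> B (fun x => S x \/ T x)),
      (forall S, B S -> B (span S))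
    & (forall S T, B S -> B T -> B (setmul S T))].

(* rho(M) <= 1 : sum_{n>=0} r^{-n} ⋆ M^n is bounded for every r > 1 *)
Definition rho_le1 (B : (A -> Prop) -> Prop) (pi : V) (eps : Rdefinitions.R)
  (M : A -> Prop) : Prop :=
  forall r : Rdefinitions.R, Rlt 1 r ->
    B (finsums (fun z => exists n : nat,
                  sscale (pi ^+ star_exp eps r n) (setpow M n) z)).

End Born.

(* The weight r^{-n} ⋆ _ multiplies by pi^k(n) with k(n) = ⌈n log r / log(1/eps)⌉,
   a linear function of n; for r = 1/eps it is exactly pi^n.  Hence (1), applied to
   the span M0 of a bounded M, bounds the sums of pi^n M0^n and thus of pi^j M^{j+1}
   = (pi^j M^j) M, which is (3).  From (3), the sums of pi^j M0^{j+1} form a bounded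
   submodule Q containing S with pi Q^2 ⊆ Q, since pi (pi^i M0^{i+1})(pi^j M0^{j+1})
   ⊆ pi^{i+j+1} M0^{i+j+2}: this is (4).  Such a Q absorbs pi^j Q^{j+1}, so once it
   contains M^c and M^d it absorbs pi^j M^{cj+d}, giving (2); choosing c with
   k(n) ≥ n / c and writing n = c (n / c) + n mod c gives (1) as well. *)

From Pilot Require Import Defs.
From Stdlib Require Import Reals Lra Lia ZArith.
Set Implicit Arguments. Unset Strict Implicit. Unset Printing Implicit Defensive.

(* Stated before loading MathComp, whose nat notations would shadow Peano's [<=] and [*]. *)
Section StarExponent.
Local Open Scope R_scope.

Lemma Zceil_ge (x : R) : x <= IZR (Defs.Zceil x).
Proof. unfold Defs.Zceil; rewrite minus_IZR; destruct (archimed (- x)); lra. Qed.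

Lemma Zceil_IZR (z : Z) : Defs.Zceil (IZR z) = z.
Proof.
unfold Defs.Zceil; rewrite <- (tech_up (- IZR z) (- z + 1)); [lia | |];
  rewrite plus_IZR, opp_IZR; lra.
Qed.

Variable eps : R.
Hypotheses (eps_gt0 : 0 < eps) (eps_lt1 : eps < 1).

Lemma ln_eps_lt0 : ln eps < 0.
Proof. rewrite <- ln_1; apply ln_increasing; lra. Qed.

Lemma inv_eps_gt1 : 1 < / eps.
Proof. rewrite <- Rinv_1; apply Rinv_lt_contravar; lra. Qed.

Lemma log_base_inv_pow (r : R) (n : nat) : 0 < r ->
  log_base eps (/ r ^ n) = INR n * (ln r / - ln eps).
Proof.
intros r_gt0; pose proof ln_eps_lt0.
unfold log_base; rewrite ln_Rinv, ln_pow by (try apply pow_lt; lra).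
field; lra.
Qed.

Lemma star_exp_ge (r : R) (n : nat) : 0 < r ->
  INR n * (ln r / - ln eps) <= INR (star_exp eps r n).
Proof.
intros r_gt0; unfold star_exp; rewrite <- log_base_inv_pow by exact r_gt0.
set (x := log_base _ _); set (z := Defs.Zceil x).
apply Rle_trans with (IZR z); [apply Zceil_ge|].
destruct (Z_le_gt_dec 0 z) as [z_ge0 | z_lt0].
- rewrite INR_IZR_INZ, Z2Nat.id by exact z_ge0; lra.
- apply Rle_trans with 0; [apply IZR_le; lia | apply pos_INR].
Qed.

Lemma star_exp_linear (r : R) : 1 < r ->
  exists c : nat, (0 < c)%nat /\
    forall q n : nat, (q * c <= n)%nat -> (q <= star_exp eps r n)%nat.
Proof.
intros r_gt1.
assert (slope_gt0 : 0 < ln r / - ln eps).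
{ pose proof ln_eps_lt0; apply Rdiv_lt_0_compat; [|lra].
  rewrite <- ln_1; apply ln_increasing; lra. }
destruct (archimed_cor1 _ slope_gt0) as [c [c_inv c_gt0]].
exists c; split; [exact c_gt0|]; intros q n qc_le_n.
apply INR_le; apply le_INR in qc_le_n; rewrite mult_INR in qc_le_n.
assert (c_pos : 0 < INR c) by (apply lt_0_INR; exact c_gt0).
assert (one_le : 1 <= INR c * (ln r / - ln eps)).
{ apply (Rmult_lt_compat_l (INR c)) in c_inv; [|exact c_pos].
  rewrite Rinv_r in c_inv; lra. }
assert (q_ge0 := pos_INR q).
apply Rle_trans with (INR n * (ln r / - ln eps)); [nra | apply star_exp_ge; lra].
Qed.

Lemma star_exp_inv_eps (n : nat) : star_exp eps (/ eps) n = n.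
Proof.
unfold star_exp; rewrite log_base_inv_pow by (apply Rinv_0_lt_compat; exact eps_gt0).
replace (ln (/ eps) / - ln eps) with 1
  by (pose proof ln_eps_lt0; rewrite ln_Rinv by exact eps_gt0; field; lra).
rewrite Rmult_1_r, INR_IZR_INZ, Zceil_IZR; apply Nat2Z.id.
Qed.

End StarExponent.

From HB Require Import structures.
From mathcomp Require Import all_boot all_order all_algebra.
Import GRing.Theory.
Local Open Scope ring_scope.

Section SetAlgebra.
Variables (V : idomainType) (A : algType V).
Implicit Types (U M Q S T : A -> Prop) (a : V) (x y z : A).

Lemma finsumsD U x y : finsums U x -> finsums U y -> finsums U (x + y).
Proof.
elim=> [|u s Uu _ IHs] Uy; first by rewrite add0r.
by rewrite -addrA; constructor => //; apply: IHs.
Qed.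

Lemma sub_finsums U : incl_set U (finsums U).
Proof. by move=> x Ux; rewrite -[x]addr0; constructor => //; constructor. Qed.

Lemma finsums_mono U T : incl_set U T -> incl_set (finsums U) (finsums T).
Proof. by move=> UT x; elim=> [|u s Uu _ IHs]; constructor => //; apply: UT. Qed.

Lemma finsums_sub_submod U M :
  is_submod M -> incl_set U M -> incl_set (finsums U) M.
Proof. by case=> M0 MD _ UM x; elim=> // u s Uu _ IHs; apply: MD => //; apply: UM. Qed.

Lemma finsums_submod U :
  (forall a u, U u -> U (a *: u)) -> is_submod (finsums U).
Proof.
move=> UZ; split; [exact: finsums0 | exact: finsumsD |].
move=> a x; elim=> [|u s Uu _ IHs]; first by rewrite scaler0; constructor.
by rewrite scalerDr; constructor => //; apply: UZ.
Qed.

Lemma span_submod S : is_submod (Defs.span S).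
Proof.
by apply: finsums_submod => a _ [b [y [Sy ->]]]; exists (a * b), y; rewrite scalerA.
Qed.

Lemma sub_span S : incl_set S (Defs.span S).
Proof. by move=> x Sx; apply: sub_finsums; exists 1, x; rewrite scale1r. Qed.

Lemma finsums_sub_span U : incl_set (finsums U) (Defs.span U).
Proof. by apply: finsums_mono => x Ux; exists 1, x; rewrite scale1r. Qed.

Lemma finsums_mul_scale U Q a x y : is_submod Q ->
  (forall u v, U u -> U v -> Q (a *: (u * v))) ->
  finsums U x -> finsums U y -> Q (a *: (x * y)).
Proof.
case=> Q0 QD _ UUQ; elim=> [|u s Uu _ IHs] Uy; first by rewrite mul0r scaler0.
rewrite mulrDl scalerDr; apply: (QD); last exact: IHs.
elim: Uy => [|v t Uv _ IHt]; first by rewrite mulr0 scaler0.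
by rewrite mulrDr scalerDr; apply: (QD) => //; apply: UUQ.
Qed.

Lemma mul_setpow M m n x y :
  setpow M m x -> setpow M n y -> setpow M (m + n) (x * y).
Proof.
move=> Mx; elim: n y => [|n IHn] y /=; first by move=> ->; rewrite addn0 mulr1.
move=> [y' [w [My' [Mw ->]]]]; rewrite addnS.
by exists (x * y'), w; rewrite mulrA; split; [apply: IHn|].
Qed.

Lemma setpowD_split M m n z : setpow M (m + n) z ->
  exists x y, [/\ setpow M m x, setpow M n y & z = x * y].
Proof.
elim: n z => [|n IHn] z; first by rewrite addn0 => Mz; exists z, 1; rewrite mulr1.
rewrite addnS => -[z' [w [Mz' [Mw ->]]]].
have [x [y [Mx My ->]]] := IHn _ Mz'.
by exists x, (y * w); split => //; [exists y, w | rewrite mulrA].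
Qed.

Lemma setpow1P M x : setpow M 1 x <-> M x.
Proof.
split=> [[u [w [/= -> [Mw ->]]]] | Mx]; first by rewrite mul1r.
by exists 1, x; rewrite mul1r.
Qed.

Lemma setpow_mono M Q n : incl_set M Q -> incl_set (setpow M n) (setpow Q n).
Proof.
move=> MQ; elim: n => [|n IHn] x //= [u [w [Mu [Mw ->]]]].
by exists u, w; split; [apply: IHn | split => //; apply: MQ].
Qed.

Lemma setpowM M Q c j :
  incl_set (setpow M c) Q -> incl_set (setpow M (c * j)) (setpow Q j).
Proof.
move=> McQ; elim: j => [|j IHj] x; first by rewrite muln0.
rewrite mulnS addnC => /setpowD_split [u [w [Mu Mw ->]]].
by exists u, w; split; [apply: IHj | split => //; apply: McQ].
Qed.

Lemma setpowS_scale M n a x :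
  is_submod M -> setpow M n.+1 x -> setpow M n.+1 (a *: x).
Proof.
case=> _ _ MZ [u [w [Mu [Mw ->]]]].
by exists u, (a *: w); rewrite scalerAr; split => //; split => //; apply: MZ.
Qed.

Definition pi_stable (pi : V) M := incl_set (sscale pi (setpow M 2)) M.

Lemma pi_stable_setpowS pi Q j x : is_submod Q -> pi_stable pi Q ->
  setpow Q j.+1 x -> Q (pi ^+ j *: x).
Proof.
move=> sQ piQ; elim: j x => [|j IHj] x; first by rewrite expr0 scale1r => /setpow1P.
move=> [u [w [Qu [Qw ->]]]]; rewrite exprS -scalerA scalerAl.
apply: piQ; exists ((pi ^+ j *: u) * w); split => //.
by exists (pi ^+ j *: u), w; split => //; apply/setpow1P/IHj.
Qed.

Lemma pi_stable_setpow_affine pi Q M c d j z : is_submod Q -> pi_stable pi Q ->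
  incl_set (setpow M c) Q -> incl_set (setpow M d) Q ->
  setpow M (c * j + d) z -> Q (pi ^+ j *: z).
Proof.
move=> sQ piQ McQ MdQ /setpowD_split [x [y [Mx My ->]]].
apply: (pi_stable_setpowS sQ piQ); exists x, y.
by split; [exact: setpowM Mx | split => //; apply: MdQ].
Qed.

End SetAlgebra.

Section Bornology.
Variables (V : idomainType) (A : algType V) (B : (A -> Prop) -> Prop).
Hypothesis bornB : bornological_algebra B.
Implicit Types (U M S T : A -> Prop).

Lemma bounded_sub S T : B T -> incl_set S T -> B S.
Proof. by case: bornB => _ H _ _ _; apply: H. Qed.

Lemma bounded_union S T : B S -> B T -> B (fun x => S x \/ T x).
Proof. by case: bornB => _ _ H _ _; apply: H. Qed.

Lemma bounded_span S : B S -> B (Defs.span S).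
Proof. by case: bornB => _ _ _ H _; apply: H. Qed.

Lemma bounded_setmul S T : B S -> B T -> B (setmul S T).
Proof. by case: bornB => _ _ _ _ H; apply: H. Qed.

Lemma bounded_finsums U T : B T -> incl_set U T -> B (finsums U).
Proof.
move=> BT UT; apply: (bounded_sub (bounded_span BT)) => x Ux.
by apply: finsums_sub_span; apply: finsums_mono Ux.
Qed.

Lemma bounded_setpow M n : B M -> B (setpow M n).
Proof.
move=> BM; elim: n => [|n IHn]; last exact: bounded_setmul.
case: bornB => H _ _ _ _; apply: (bounded_sub (H [:: 1])) => x ->.
exact: mem_head.
Qed.

Lemma bounded_setpow_le M c :
  B M -> B (fun z => exists d, (d <= c)%N /\ setpow M d z).
Proof.
move=> BM; elim: c => [|c IHc].
  by apply: (bounded_sub (bounded_setpow 0 BM)) => z [[|d] []].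
apply: (bounded_sub (bounded_union IHc (bounded_setpow c.+1 BM))) => z [d [+ Mz]].
by rewrite leq_eqVlt => /orP [/eqP dc | ltdc]; [right; rewrite -dc | left; exists d].
Qed.

Variables (pi : V) (eps : Rdefinitions.R).

Definition rho_le1_all :=
  forall M, B M -> is_submod M -> rho_le1 B pi eps M.

Definition bounded_powsums := forall M, B M -> forall c d : nat,
  B (finsums (fun z => exists j, sscale (pi ^+ j) (setpow M (c * j + d)) z)).

Definition bounded_powsums_succ := forall M, B M ->
  B (finsums (fun z => exists j, sscale (pi ^+ j) (setpow M j.+1) z)).

Definition pi_stable_hulls := forall S, B S ->
  exists M, [/\ B M, is_submod M, incl_set S M & pi_stable pi M].

Lemma powsums_of_pi_stable_hulls : pi_stable_hulls -> bounded_powsums.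
Proof.
move=> hulls M BM c d.
have [Q [BQ sQ McdQ piQ]] :=
  hulls _ (bounded_union (bounded_setpow c BM) (bounded_setpow d BM)).
apply: (bounded_sub BQ); apply: (finsums_sub_submod sQ) => _ [j [x [Mx ->]]].
by apply: (pi_stable_setpow_affine sQ piQ _ _ Mx) => y My; apply: McdQ; [left | right].
Qed.

Lemma powsums_succ_of_powsums : bounded_powsums -> bounded_powsums_succ.
Proof.
move=> powsums M BM; apply: (bounded_sub (powsums M BM 1 1)); apply: finsums_mono.
by move=> z [j Mz]; exists j; rewrite mul1n addn1.
Qed.

Lemma pi_stable_hulls_of_powsums_succ : bounded_powsums_succ -> pi_stable_hulls.
Proof.
move=> powsums S BS.
pose M0 := Defs.span S; have sM0 : is_submod M0 := span_submod S.
pose U z := exists j, sscale (pi ^+ j) (setpow M0 j.+1) z.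
have sQ : is_submod (finsums U).
  apply: finsums_submod => a _ [j [x [M0x ->]]].
  by exists j, (a *: x); rewrite !scalerA mulrC; split => //; apply: setpowS_scale.
exists (finsums U); split => //; first exact: (powsums _ (bounded_span BS)).
  move=> s Ss; apply: sub_finsums; exists 0%N, s.
  by rewrite expr0 scale1r; split => //; apply/setpow1P/sub_span.
move=> _ [_ [[x [y [/setpow1P Ux [Uy ->]]]] ->]].
apply: (finsums_mul_scale sQ _ Ux Uy) => _ _ [i [u [M0u ->]]] [j [v [M0v ->]]].
rewrite -scalerAl -scalerAr !scalerA; apply: sub_finsums; exists (i + j).+1, (u * v).
by rewrite exprS exprD mulrA -addnS -addSn; split => //; apply: mul_setpow.
Qed.

Hypotheses (eps_gt0 : Rlt 0 eps) (eps_lt1 : Rlt eps 1).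

Lemma rho_le1_of_pi_stable_hulls : pi_stable_hulls -> rho_le1_all.
Proof.
move=> hulls M BM _ r r_gt1.
have [c [/ltP c_gt0 c_lin]] := star_exp_linear eps_gt0 eps_lt1 r_gt1.
have [Q [BQ sQ MleQ piQ]] := hulls _ (bounded_setpow_le c BM).
apply: (bounded_sub BQ); apply: (finsums_sub_submod sQ) => _ [n [x [Mx ->]]].
have q_le_k : (n %/ c <= star_exp eps r n)%N.
  by apply/leP/c_lin; apply/leP; rewrite multE leq_divM.
rewrite -(subnK q_le_k) exprD -scalerA; have [_ _ QZ] := sQ; apply: QZ.
move: Mx; rewrite {1}(divn_eq n c) mulnC.
apply: (pi_stable_setpow_affine sQ piQ) => y My; apply: MleQ.
  by exists c.
by exists (n %% c)%N; rewrite ltnW ?ltn_pmod.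
Qed.

Lemma powsums_succ_of_rho_le1 : rho_le1_all -> bounded_powsums_succ.
Proof.
move=> rho_le1_M M BM.
pose M0 := Defs.span M; have BM0 : B M0 := bounded_span BM.
have BT := rho_le1_M _ BM0 (span_submod M) _ (inv_eps_gt1 eps_gt0 eps_lt1).
apply: (bounded_finsums (bounded_setmul BT BM)) => _ [j [_ [[x [y [Mx [My ->]]]] ->]]].
exists (pi ^+ j *: x), y; rewrite scalerAl; split => //.
apply: sub_finsums; exists j, x; rewrite star_exp_inv_eps //.
by split => //; apply: setpow_mono Mx; apply: sub_span.
Qed.

End Bornology.

Theorem mainTheorem12 (V : idomainType) (pi : V) (eps : Rdefinitions.R)
  (A : algType V) (B : (A -> Prop) -> Prop) :
  complete_DVR_unif pi -> Rlt 0 eps -> Rlt eps 1 ->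
  bornological_algebra B ->
  [<-> (forall M : A -> Prop, B M -> is_submod M -> rho_le1 B pi eps M);
       (forall M : A -> Prop, B M -> forall c d : nat,
          B (finsums (fun z => exists j : nat,
                        sscale (pi ^+ j) (setpow M (c * j + d)) z)));
       (forall M : A -> Prop, B M ->
          B (finsums (fun z => exists j : nat,
                        sscale (pi ^+ j) (setpow M j.+1) z)));
       (forall S : A -> Prop, B S ->
          exists M : A -> Prop, [/\ B M, is_submod M, incl_set S M &
            incl_set (sscale pi (setpow M 2)) M])].
Proof.
move=> _ eps_gt0 eps_lt1 bornB; tfae.
- by move=> /(powsums_succ_of_rho_le1 bornB eps_gt0 eps_lt1)
    /(pi_stable_hulls_of_powsums_succ bornB) /(powsums_of_pi_stable_hulls bornB).
- exact: powsums_succ_of_powsums.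
- exact: pi_stable_hulls_of_powsums_succ.
- exact: (rho_le1_of_pi_stable_hulls bornB).
Qed.
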